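(* Consider a series system of two components $c_1,c_2$ (so $\phi(s)=1$ iff $s_1=s_2=1$) with independent states, perfect inspections ($y_k=s_k$), equal repair costs $C_{R,1}=C_{R,2}=C_R$ and $0\le C_R\le C_F/2$. Then for $\{i,j\}=\{1,2\}$, $$L^L_\omega(i)=p_iC_R+\min\{C_R,\;p_jC_F\}.$$ Moreover, if both $p_1$ and $p_2$ are at most $\tilde p=C_R/C_F$, then the component with the larger marginal failure probability has the (weakly) larger local value of information: $p_i\ge p_j\Rightarrow \mathrm{VoI}_L(i)\ge\mathrm{VoI}_L(j)$.
   Context: Components $c_1,c_2$ have binary states $s_k\in\{0,1\}$ ($1$: working, $0$: failed) with marginal failure probabilities $p_k=\mathbb{P}[s_k=0]$; $C_F>0$ is the cost of system failure. Local metric: an action is $A=(a_1,a_2)\in\{0,1\}^2$ ($a_k=1$: replace $c_k$); replacement is perfect, so the post-action state has $s'_k=1$ if $a_k=1$ and $s'_k=s_k$ otherwise. The loss is $\mathcal{L}(s',A)=C_F(1-\phi(s'))+\sum_k a_kC_{R,k}$. The prior loss is $L^L_\pi=\min_A\mathbb{E}[\mathcal{L}(s',A)]$; inspecting $c_i$ gives observation $y_i$, with posterior loss $L^L_{\omega|y_i=c}=\min_A\mathbb{E}[\mathcal{L}(s',A)\mid y_i=c]$ and expected posterior loss $L^L_\omega(i)=\mathbb{P}[y_i=0]L^L_{\omega|y_i=0}+\mathbb{P}[y_i=1]L^L_{\omega|y_i=1}$ (terms with zero probability omitted); $\mathrm{VoI}_L(i)=L^L_\pi-L^L_\omega(i)$.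 *)

From HB Require Import structures.
From mathcomp Require Import all_boot all_order all_algebra.
Set Implicit Arguments. Unset Strict Implicit. Unset Printing Implicit Defensive.
Import Order.TTheory GRing.Theory Num.Theory.
Local Open Scope ring_scope.

(* component states: true = working (s_k = 1), false = failed (s_k = 0) *)
Definition state := {ffun 'I_2 -> bool}.
(* actions: a k = true means replace component k *)
Definition action := {ffun 'I_2 -> bool}.

Definition phi_series (s : state) : bool := [forall k, s k].

Definition post (s : state) (A : action) : state := [ffun k => A k || s k].

Section Loc.
Variable R : realFieldType.

Definition loss (phi : state -> bool) (CF : R) (CRk : 'I_2 -> R)
    (s' : state) (A : action) : R :=
  CF * (1 - (phi s')%:R) + \sum_(k < 2) (A k)%:R * CRk k.

Definition probS (p : 'I_2 -> R) (s : state) : R :=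
  \prod_(k < 2) (if s k then 1 - p k else p k).

Definition minA (f : action -> R) : R :=
  \big[Num.min/f [ffun => false]]_(A : action) f A.

Definition Eloss_on phi CF CRk p (E : pred state) (A : action) : R :=
  \sum_(s : state | E s) probS p s * loss phi CF CRk (post s A) A.

Definition L_prior phi CF CRk p : R := minA (Eloss_on phi CF CRk p predT).

(* perfect inspection: y_i = s_i. P[y_i = c] *)
Definition prob_obs p (i : 'I_2) (c : bool) : R :=
  \sum_(s : state | s i == c) probS p s.

Definition L_post_given phi CF CRk p (i : 'I_2) (c : bool) : R :=
  minA (fun A => Eloss_on phi CF CRk p (fun s => s i == c) A / prob_obs p i c).

(* expected posterior loss; zero-probability terms omitted *)
Definition L_omega phi CF CRk p (i : 'I_2) : R :=
  \sum_(c : bool | prob_obs p i c != 0)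
     prob_obs p i c * L_post_given phi CF CRk p i c.

Definition VoI_L phi CF CRk p (i : 'I_2) : R :=
  L_prior phi CF CRk p - L_omega phi CF CRk p i.

End Loc.

(* If c_i works, the best action only
   concerns c_j: replace it (cost C_R) or accept the risk p_j C_F of failure,
   i.e. min{C_R, p_j C_F}.  If c_i has failed, leaving it costs C_F >= 2 C_R,
   so c_i is replaced and the same choice remains for c_j.  Averaging over
   the outcome of y_i gives p_i C_R + min{C_R, p_j C_F}.  When both p_k are
   below C_R / C_F the minimum is p_j C_F, and L_omega(j) - L_omega(i) =
   (p_i - p_j)(C_F - C_R) >= 0, while the prior loss is common to i and j. *)

From Pilot Require Import Defs.
From HB Require Import structures.
From mathcomp Require Import all_boot all_order all_algebra.
From mathcomp Require Import ring lra.
Set Implicit Arguments. Unset Strict Implicit. Unset Printing Implicit Defensive.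
Import Order.TTheory GRing.Theory Num.Theory.
Local Open Scope ring_scope.

Lemma ord2_neq_eq (i j k : 'I_2) : i != j -> (k != i) = (k == j).
Proof.
by case: i j k => [[|[|?]] ?] [[|[|?]] ?] [[|[|?]] ?].
Qed.

Lemma minA_eq (R : realFieldType) (f : action -> R) (v : R) :
  (exists A, f A = v) -> (forall A, v <= f A) -> Defs.minA f = v.
Proof.
move=> [B <-] f_ge; apply/le_anti/andP; split; last first.
  by rewrite /Defs.minA; elim/big_ind: _ => // x y; rewrite le_min => -> ->.
by rewrite /Defs.minA (bigD1 B) //= ge_min lexx.
Qed.

Section SeriesPair.
Variables (R : realFieldType) (i j : 'I_2).
Hypothesis neq_ij : i != j.

Definition pairf (a b : bool) : {ffun 'I_2 -> bool} :=
  [ffun k => if k == i then a else b].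

Lemma pairf_i a b : pairf a b i = a.
Proof. by rewrite ffunE eqxx. Qed.

Lemma pairf_j a b : pairf a b j = b.
Proof. by rewrite ffunE eq_sym (negbTE neq_ij). Qed.

Lemma pairf_eta (f : {ffun 'I_2 -> bool}) : f = pairf (f i) (f j).
Proof.
apply/ffunP => k; rewrite ffunE; case: eqP => [-> //|/eqP].
by rewrite (ord2_neq_eq _ neq_ij) => /eqP ->.
Qed.

Lemma big_ord2_pair (idx : R) (op : Monoid.com_law idx) (F : 'I_2 -> R) :
  \big[op/idx]_(k < 2) F k = op (F i) (F j).
Proof.
rewrite (bigD1 i) //= (big_pred1 j) // => k /=.
exact: ord2_neq_eq.
Qed.

Lemma sum_pairf (F : {ffun 'I_2 -> bool} -> R) :
  \sum_f F f = \sum_(a : bool) \sum_(b : bool) F (pairf a b).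
Proof.
rewrite pair_bigA (reindex (fun ab : bool * bool => pairf ab.1 ab.2)) //=.
exists (fun f => (f i, f j)) => [[a b] _|f _] /=.
  by rewrite pairf_i pairf_j.
by rewrite -pairf_eta.
Qed.

Definition pr_state (q : R) (c : bool) : R := if c then 1 - q else q.

Lemma probS_pair (p : 'I_2 -> R) (s : state) :
  probS p s = pr_state (p i) (s i) * pr_state (p j) (s j).
Proof. exact: big_ord2_pair. Qed.

Lemma phi_series_pair (s : state) : phi_series s = s i && s j.
Proof.
apply/forallP/andP => [s_all|[si sj] k]; first by split; apply: s_all.
have [-> //|] := eqVneq k i.
by rewrite (ord2_neq_eq _ neq_ij) => /eqP ->.
Qed.

Lemma loss_series_pair (CF CR : R) (s : state) (A : action) :
  loss phi_series CF (fun _ => CR) s A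
  = CF * (1 - (s i && s j)%:R) + ((A i)%:R * CR + (A j)%:R * CR).
Proof.
by rewrite /loss big_ord2_pair phi_series_pair.
Qed.

Variables (CF CR : R) (p : 'I_2 -> R).

Definition cond_loss (c ai aj : bool) : R :=
  CR * (ai%:R + aj%:R) + CF * (1 - (ai || c)%:R * (if aj then 1 else 1 - p j)).

Lemma prob_obs_pair (c : bool) : prob_obs p i c = pr_state (p i) c.
Proof.
rewrite /prob_obs big_mkcond sum_pairf !big_bool /=.
rewrite !probS_pair !pairf_i !pairf_j /pr_state.
by case: c => /=; ring.
Qed.

Lemma Eloss_obs (c : bool) (A : action) :
  Eloss_on phi_series CF (fun _ => CR) p (fun s => s i == c) A
  = pr_state (p i) c * cond_loss c (A i) (A j).
Proof.
rewrite /Eloss_on big_mkcond sum_pairf !big_bool /=.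
have neq_ji : (j == i) = false by rewrite eq_sym (negbTE neq_ij).
rewrite !probS_pair !loss_series_pair /post !ffunE !eqxx !neq_ji.
rewrite /cond_loss /pr_state.
by case: c; case: (A i); case: (A j) => /=; ring.
Qed.

Definition best_post (c : bool) : R :=
  (~~ c)%:R * CR + Num.min CR (p j * CF).

Lemma cond_loss_ge (c ai aj : bool) :
  0 <= CR -> CR <= CF / 2 -> best_post c <= cond_loss c ai aj.
Proof.
move=> CR_ge0 CR_le_CF2.
have CR2_le_CF : CR * 2 <= CF by rewrite -ler_pdivlMr.
have le_CR : Num.min CR (p j * CF) <= CR by rewrite ge_min lexx.
have le_pCF : Num.min CR (p j * CF) <= p j * CF by rewrite ge_min lexx orbT.
rewrite /best_post /cond_loss.
by case: c; case: ai; case: aj => /=; nra.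
Qed.

Lemma cond_loss_best (c : bool) :
  cond_loss c (~~ c) (CR <= p j * CF) = best_post c.
Proof.
by rewrite /best_post /cond_loss; case: leP; case: c => /= _; ring.
Qed.

Lemma L_post_series (c : bool) :
  0 <= CR -> CR <= CF / 2 -> pr_state (p i) c != 0 ->
  L_post_given phi_series CF (fun _ => CR) p i c = best_post c.
Proof.
move=> CR_ge0 CR_le_CF2 pr_neq0; apply: minA_eq => [|A].
  exists (pairf (~~ c) (CR <= p j * CF)).
  rewrite Eloss_obs prob_obs_pair mulrC mulKf //.
  by rewrite pairf_i pairf_j cond_loss_best.
by rewrite Eloss_obs prob_obs_pair mulrC mulKf // cond_loss_ge.
Qed.

Lemma L_omega_series : 0 <= CR -> CR <= CF / 2 ->
  L_omega phi_series CF (fun _ => CR) p i = p i * CR + Num.min CR (p j * CF).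
Proof.
move=> CR_ge0 CR_le_CF2.
rewrite /L_omega (eq_bigr (fun c => pr_state (p i) c * best_post c));
  last first.
  by move=> c; rewrite prob_obs_pair => /L_post_series ->.
rewrite big_mkcond big_bool /= !prob_obs_pair.
have drop0 (c : bool) :
    (if pr_state (p i) c != 0 then pr_state (p i) c * best_post c else 0)
    = pr_state (p i) c * best_post c.
  by case: eqP => [->|]; rewrite ?mul0r.
by rewrite !drop0 /pr_state /best_post /=; ring.
Qed.

End SeriesPair.

Theorem mainTheorem5 (R : realFieldType) (CF CR : R) (p : 'I_2 -> R) :
  0 < CF -> 0 <= CR -> CR <= CF / 2 ->
  (forall k, 0 <= p k <= 1) ->
  (forall i j : 'I_2, i != j ->
     L_omega phi_series CF (fun _ => CR) p i
     = p i * CR + Num.min CR (p j * CF)) /\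
  ((forall k, p k <= CR / CF) ->
   forall i j : 'I_2, p j <= p i ->
     VoI_L phi_series CF (fun _ => CR) p j <= VoI_L phi_series CF (fun _ => CR) p i).
Proof.
move=> CF_gt0 CR_ge0 CR_le_CF2 _.
split=> [i j neq_ij|p_le i j le_pji]; first exact: L_omega_series.
have [<-|neq_ij] := eqVneq i j; first by [].
have pCF_le k : p k * CF <= CR by rewrite -ler_pdivlMr.
have neq_ji : j != i by rewrite eq_sym.
rewrite /VoI_L lerD2l lerN2.
rewrite (L_omega_series neq_ij) // (L_omega_series neq_ji) //.
rewrite !min_r //; nra.
Qed.
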